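(* Every superset-closed adversary $\mathcal A\subseteq 2^\Pi$ is fair, i.e. for all $P\subseteq\Pi$ and $Q\subseteq P$, $\mathit{setcon}(\mathcal A|_{P,Q})=\min(|Q|,\mathit{setcon}(\mathcal A|_P))$.
   Context: An adversary is a set $\mathcal A\subseteq 2^\Pi$ of subsets (live sets) of the process set $\Pi=\{p_1,\dots,p_n\}$. It is superset-closed if $S\in\mathcal A$, $S\subseteq S'\subseteq\Pi$ imply $S'\in\mathcal A$. $\mathcal A|_P=\{S\in\mathcal A: S\subseteq P\}$ and $\mathcal A|_{P,Q}=\{S\in\mathcal A|_P: S\cap Q\neq\emptyset\}$. The set consensus power is defined recursively by $\mathit{setcon}(\emptyset)=0$ and, for $\mathcal A\ne\emptyset$, $\mathit{setcon}(\mathcal A)=\max_{S\in\mathcal A}\min_{a\in S}\mathit{setcon}(\mathcal A|_{S\setminus\{a\}})+1$. $\mathcal A$ is fair if for all $P\subseteq\Pi$ and $Q\subseteq P$, $\mathit{setcon}(\mathcal A|_{P,Q})=\min(|Q|,\mathit{setcon}(\mathcal A|_P))$. (Known fact usable: for superset-closed $\mathcal A$, $\mathit{setcon}(\mathcal A)$ equals the minimum size of a hitting set of $\mathcal A$, i.e. a subset of $\Pi$ meeting every live set.) *)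

From mathcomp Require Import all_boot.
Set Implicit Arguments. Unset Strict Implicit. Unset Printing Implicit Defensive.

(* Processes Pi = 'I_n; an adversary is a set of live sets. *)
Definition adversary (n : nat) := {set {set 'I_n}}.

Definition superset_closed n (A : adversary n) : Prop :=
  forall S S' : {set 'I_n}, S \in A -> S \subset S' -> S' \in A.

Definition restr n (A : adversary n) (P : {set 'I_n}) : adversary n :=
  [set S in A | S \subset P].

Definition restr2 n (A : adversary n) (P Q : {set 'I_n}) : adversary n :=
  [set S in restr A P | [exists x, (x \in S) && (x \in Q)]].

(* setcon with fuel; each recursive call strictly shrinks the adversary
   (S itself is removed), so fuel #|A| is enough. *)
Fixpoint setcon_fuel n (k : nat) (A : adversary n) : nat :=
  match k with
  | 0 => 0
  | k'.+1 =>
      if A == set0 then 0 else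
      (\max_(S in A) \big[minn/n]_(a in S) setcon_fuel k' (restr A (S :\ a))).+1
  end.

Definition setcon n (A : adversary n) : nat := setcon_fuel #|A| A.

(* For a superset-closed adversary, setcon of A|_P is the minimum size of a
   hitting set, by induction along its recursion: a minimum hitting set H of
   A|_P meets every live set S in some a, and H \ a hits A|_{S \ a}, while
   for a in P any hitting set of A|_{P \ a} becomes one of A|_P by adding a
   (P itself is live, as A|_P is nonempty).  Now A|_{P,Q} is the
   restriction to P of the superset-closed adversary of live sets meeting Q.
   Both Q and every hitting set of A|_P hit it; conversely, a hitting set H
   of A|_{P,Q} missing some q in Q hits A|_P, for a live set T ⊆ P \ H
   would put P \ H in A|_{P,Q}. *)

From HB Require Import structures.
From mathcomp Require Import all_boot.

Set Implicit Arguments.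
Unset Strict Implicit.

HB.instance Definition _ := SemiGroup.isComLaw.Build nat minn minnA minnC.

Section HittingSets.
Variable n : nat.
Implicit Types (A B : adversary n) (P Q S X H : {set 'I_n}).

Definition hitting B H := [forall S in B, [exists x in S, x \in H]].

(* [setT] is the default value, which is returned when nothing hits [B]. *)
Definition min_hitting_set B := [arg min_(H < setT | hitting B H) #|H|].

Definition hitting_number B := #|min_hitting_set B|.

Lemma hittingP B H :
  reflect (forall S, S \in B -> exists2 x, x \in S & x \in H) (hitting B H).
Proof.
apply: (iffP forall_inP) => hitH S /hitH; first by case/exists_inP=> x; exists x.
by case=> x xS xH; apply/exists_inP; exists x.
Qed.

Lemma hittingS B H H' : H \subset H' -> hitting B H -> hitting B H'.
Proof.
move=> sHH' /hittingP hitH; apply/hittingP => S /hitH [x xS xH].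
by exists x; rewrite ?(subsetP sHH').
Qed.

Lemma sub_hitting B B' H : B \subset B' -> hitting B' H -> hitting B H.
Proof. by move=> sBB' /hittingP hitH; apply/hittingP => S /(subsetP sBB') /hitH. Qed.

Lemma hitting_setT B : set0 \notin B -> hitting B setT.
Proof.
move=> B0; apply/hittingP => S SB.
have /set0Pn [x xS] : S != set0 by apply: contraNneq B0 => <-.
by exists x; rewrite ?in_setT.
Qed.

Lemma hitting_min_hitting_set B : set0 \notin B -> hitting B (min_hitting_set B).
Proof. by move/hitting_setT=> hitT; rewrite /min_hitting_set; case: arg_minnP. Qed.

Lemma hitting_number_min B H : hitting B H -> hitting_number B <= #|H|.
Proof.
move=> hitH; have hitT := hittingS (subsetT H) hitH.
by rewrite /hitting_number /min_hitting_set; case: arg_minnP => // H0 _; apply.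
Qed.

Lemma hitting_number_le_n B : set0 \notin B -> hitting_number B <= n.
Proof.
by move/hitting_setT/hitting_number_min; rewrite cardsT card_ord.
Qed.

Lemma hitting_number_gt0 B : set0 \notin B -> B != set0 -> 0 < hitting_number B.
Proof.
move=> B0 /set0Pn [S SB]; rewrite card_gt0.
by have [x _ xH] := hittingP _ _ (hitting_min_hitting_set B0) S SB; apply/set0Pn; exists x.
Qed.

Lemma hitting_number_set0 : hitting_number set0 = 0.
Proof.
apply/eqP; rewrite -leqn0 -(cards0 'I_n) hitting_number_min //.
by apply/hittingP => S; rewrite in_set0.
Qed.

Lemma restrS B X : restr B X \subset B.
Proof. by apply/subsetP => S; rewrite inE => /andP []. Qed.

Lemma restr_restr B P X : restr (restr B P) X = restr B (P :&: X).
Proof. by apply/setP => S; rewrite !inE subsetI andbA. Qed.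

Lemma set0_notin_restr B X : set0 \notin B -> set0 \notin restr B X.
Proof. by apply: contra => /(subsetP (restrS B X)). Qed.

Lemma restrD1_proper B S a : S \in B -> a \in S -> restr B (S :\ a) \proper B.
Proof.
move=> SB aS; apply/properP; split; first exact: restrS.
exists S => //; rewrite inE SB /=.
by apply/negP => /subsetP/(_ a aS); rewrite setD11.
Qed.

Lemma hitting_restrD1 B H X a :
  hitting B H -> hitting (restr B (X :\ a)) (H :\ a).
Proof.
move=> /hittingP hitH; apply/hittingP => T; rewrite inE => /andP [/hitH [x xT xH] sTX].
exists x; rewrite // in_setD1 xH andbT.
by apply: contraTneq xT => ->; apply/negP => /(subsetP sTX); rewrite setD11.
Qed.

Lemma hitting_setU1_restr B P H a :
  B \subset powerset P -> hitting (restr B (P :\ a)) H -> hitting B (a |: H).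
Proof.
move=> sBP /hittingP hitH; apply/hittingP => T TB.
have [aT | aNT] := boolP (a \in T); first by exists a; rewrite ?setU11.
have sTP : T \subset P by move/subsetP: sBP => /(_ T TB); rewrite inE.
have [|x xT xH] := hitH T; last by exists x; rewrite ?setU1r.
rewrite inE TB subsetD1 sTP; exact: aNT.
Qed.

(* The hitting number satisfies the recursion defining [setcon]. *)
Lemma hitting_number_rec B P :
  set0 \notin B -> P \in B -> B \subset powerset P ->
  \max_(S in B) \big[minn/n]_(a in S) hitting_number (restr B (S :\ a))
    = (hitting_number B).-1.
Proof.
move=> B0 PB sBP; set H := min_hitting_set B.
have hitH : hitting B H by apply: hitting_min_hitting_set.
apply/eqP; rewrite eqn_leq; apply/andP; split.
  apply/bigmax_leqP => S SB; have [a aS aH] := hittingP _ _ hitH S SB.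
  rewrite (bigD1 a) //= geq_min; apply/orP; left.
  apply: leq_trans (hitting_number_min (hitting_restrD1 _ a hitH)) _.
  by rewrite /hitting_number -/H (cardsD1 a H) aH.
apply: leq_trans (leq_bigmax_cond _ PB).
apply: (big_ind (fun m => (hitting_number B).-1 <= m)).
- by rewrite (leq_trans (leq_pred _)) // hitting_number_le_n.
- by move=> x y lex ley; rewrite leq_min lex ley.
move=> a _; set H' := min_hitting_set (restr B (P :\ a)).
have hitH' : hitting (restr B (P :\ a)) H'.
  exact/hitting_min_hitting_set/set0_notin_restr.
have := hitting_number_min (hitting_setU1_restr sBP hitH').
rewrite cardsU1 /hitting_number -/H' -subn1 leq_subLR => /leq_trans; apply.
by rewrite leq_add2r leq_b1.
Qed.

Section SupersetClosed.
Variable A : adversary n.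
Hypotheses (A_closed : superset_closed A) (A0 : set0 \notin A).

Lemma setcon_fuel_restr k P :
  #|restr A P| <= k -> setcon_fuel k (restr A P) = hitting_number (restr A P).
Proof.
elim: k P => [|k IH] P /=.
  by rewrite leqn0 cards_eq0 => /eqP ->; rewrite hitting_number_set0.
move=> leBk; have [-> | BN0] := eqVneq (restr A P) set0.
  by rewrite hitting_number_set0.
have PB : P \in restr A P.
  have /set0Pn [S] := BN0; rewrite !inE => /andP [SA sSP].
  by rewrite (A_closed SA sSP) subxx.
have sBP : restr A P \subset powerset P by apply/subsetP => S; rewrite !inE => /andP [].
have IHB S a : S \in restr A P -> a \in S ->
    setcon_fuel k (restr (restr A P) (S :\ a))
      = hitting_number (restr (restr A P) (S :\ a)).
  move=> SB aS; rewrite restr_restr IH // -restr_restr -ltnS.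
  exact: leq_trans (proper_card (restrD1_proper SB aS)) leBk.
under eq_bigr => S SB do under eq_bigr => a aS do rewrite IHB //.
rewrite (hitting_number_rec (P := P)) ?set0_notin_restr // prednK //.
exact: hitting_number_gt0 (set0_notin_restr _ A0) BN0.
Qed.

Lemma setcon_restr P : setcon (restr A P) = hitting_number (restr A P).
Proof. exact: setcon_fuel_restr. Qed.

End SupersetClosed.

Definition meeting A Q := [set S in A | [exists x in S, x \in Q]].

Lemma restr2_meeting A P Q : restr2 A P Q = restr (meeting A Q) P.
Proof. by apply/setP => S; rewrite !inE andbAC. Qed.

Lemma meeting_superset_closed A Q : superset_closed A -> superset_closed (meeting A Q).
Proof.
move=> A_closed S S'; rewrite !inE => /andP [SA /exists_inP [x xS xQ]] sSS'.
by rewrite (A_closed _ _ SA sSS'); apply/exists_inP; exists x; rewrite ?(subsetP sSS').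
Qed.

Lemma set0_notin_meeting A Q : set0 \notin meeting A Q.
Proof. by rewrite inE; apply/nandP; right; apply/exists_inP => -[x]; rewrite inE. Qed.

Lemma hitting_restr_meeting A P Q H q :
  superset_closed A -> Q \subset P -> q \in Q -> q \notin H ->
  hitting (restr (meeting A Q) P) H -> hitting (restr A P) H.
Proof.
move=> A_closed sQP qQ qNH /hittingP hitH; apply/hittingP => T.
rewrite inE => /andP [TA sTP]; apply/exists_inP; apply: contraT => TNH.
have PDH_in : P :\: H \in restr (meeting A Q) P.
  rewrite !inE subsetDl andbT; apply/andP; split; last first.
    by apply/exists_inP; exists q; rewrite // inE qNH (subsetP sQP).
  apply: (A_closed _ _ TA); apply/subsetP => x xT.
  by rewrite inE (subsetP sTP) // andbT; apply: contra TNH => xH; apply/exists_inP; exists x.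
by have [x] := hitH _ PDH_in; rewrite inE => /andP [/negPf ->].
Qed.

Lemma hitting_number_restr_meeting A P Q :
  superset_closed A -> set0 \notin A -> Q \subset P ->
  hitting_number (restr (meeting A Q) P) = minn #|Q| (hitting_number (restr A P)).
Proof.
move=> A_closed A0 sQP; set BQ := restr (meeting A Q) P.
have sBQB : BQ \subset restr A P.
  by apply/subsetP => S; rewrite !inE => /andP [/andP [-> _] ->].
apply/eqP; rewrite eqn_leq leq_min; apply/andP; split; first (apply/andP; split).
- apply: hitting_number_min; apply/hittingP => S; rewrite !inE => /andP [/andP [_]].
  by case/exists_inP=> x; exists x.
- apply/hitting_number_min/(sub_hitting sBQB).
  exact/hitting_min_hitting_set/set0_notin_restr.
set H := min_hitting_set BQ.
have hitH : hitting BQ H by apply/hitting_min_hitting_set/set0_notin_restr/set0_notin_meeting.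
have [sQH | /subsetPn [q qQ qNH]] := boolP (Q \subset H).
  by rewrite geq_min subset_leq_card.
by rewrite geq_min hitting_number_min ?orbT // (hitting_restr_meeting A_closed sQP qQ qNH).
Qed.

End HittingSets.

Theorem theorem5 (n : nat) (A : adversary n) :
  superset_closed A -> set0 \notin A ->
  forall P Q : {set 'I_n}, Q \subset P ->
    setcon (restr2 A P Q) = minn #|Q| (setcon (restr A P)).
Proof.
move=> A_closed A0 P Q sQP.
rewrite restr2_meeting !setcon_restr ?set0_notin_meeting //.
  exact: hitting_number_restr_meeting.
exact: meeting_superset_closed.
Qed.
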